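(* Let $X$ be a real Banach space and $\varphi\colon X\to(-\infty,\infty]$ a closed (lower semicontinuous), convex, proper function. Then $\varphi$ is an Orlicz function on $X$ if and only if its convex conjugate $\varphi^*\colon X^*\to(-\infty,\infty]$, $\varphi^*(x')=\sup_{x\in X}(\langle x',x\rangle-\varphi(x))$, is an Orlicz function on $X^*$.
   Context: An Orlicz function on a Banach space $Z$ is an even, convex, lower semicontinuous, proper function $\psi\colon Z\to(-\infty,\infty]$ such that $\lim_{z\to 0}\psi(z)=0$ and $\lim_{\|z\|\to\infty}\psi(z)=+\infty$ (such a function is automatically nonnegative). *)

From HB Require Import structures.
From mathcomp Require Import all_boot all_order all_algebra.
From mathcomp Require Import all_classical all_reals all_analysis.
Set Implicit Arguments. Unset Strict Implicit. Unset Printing Implicit Defensive.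
Import Order.TTheory GRing.Theory Num.Theory.
Import numFieldNormedType.Exports.
Local Open Scope classical_set_scope.
Local Open Scope ring_scope.

(* Properties of an extended-real valued function psi on a (semi)normed real
   vector space (V, N), where the relevant points are those of a linear
   subspace D of V (D = setT for X itself, D = continuous linear functionals
   for the dual X^* seen inside the function space X -> R). *)
Section OrliczDefs.
Context {R : realType} {V : lmodType R}.
Variables (D : set V) (N : V -> R) (psi : V -> \bar R).
Local Open Scope ereal_scope.

Definition even_on := forall z, D z -> psi (- z) = psi z.

Definition convex_on := forall (x y : V) (t : R), D x -> D y ->
  (0 < t < 1)%R ->
  psi (t *: x + (1 - t) *: y) <= t%:E * psi x + (1 - t)%:E * psi y.

Definition lsc_on := forall z, D z -> forall a : R, a%:E < psi z ->
  exists2 d : R, (0 < d)%R &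
    forall w, D w -> (N (w - z) < d)%R -> a%:E < psi w.

Definition proper_on := (forall z, D z -> psi z != -oo) /\
  (exists z, D z /\ psi z != +oo).

Definition lim0_on := forall e : R, (0 < e)%R ->
  exists2 d : R, (0 < d)%R &
    forall z, D z -> (N z < d)%R -> (- e%:E < psi z) /\ (psi z < e%:E).

Definition coercive_on := forall M : R, exists r : R,
  forall z, D z -> (r < N z)%R -> M%:E < psi z.

Definition Orlicz_on := even_on /\ convex_on /\ lsc_on /\ proper_on /\
  lim0_on /\ coercive_on.

End OrliczDefs.

Section Dual.
Context {R : realType} {X : normedModType R}.

Definition is_linear_functional (f : X -> R^o) :=
  forall (a : R) (x y : X), f (a *: x + y) = a * f x + f y.

Definition dual_space : set (X -> R^o) :=
  [set f | is_linear_functional f /\ continuous f].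

Definition dual_norm (f : X -> R^o) : R :=
  sup [set `|f x| | x in [set x : X | `|x| <= 1]].

Definition conjugate (phi : X -> \bar R) (f : X -> R^o) : \bar R :=
  ereal_sup [set ((f x)%:E - phi x)%E | x in [set: X]].

End Dual.

(* An Orlicz function is nonnegative, vanishes at 0 and, being convex and
   coercive, grows at least linearly.  Evenness, convexity and lower
   semicontinuity pass to phi^*, a supremum of continuous affine functions;
   the linear growth of phi makes phi^* small near 0, and phi < 1 near 0 makes
   phi^* coercive.  Conversely, a closed proper convex phi is the supremum of
   its continuous affine minorants <x', .> - phi^*(x') (Fenchel-Moreau), so
   the same estimates run backwards, a norming functional giving coercivity.
   Fenchel-Moreau comes from the Hahn-Banach theorem (Zorn's lemma on
   dominated partial linear graphs) applied to the Lipschitz envelope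
   inf_y (phi y + k |x - y|), which for large k is convex, Lipschitz, below
   phi and arbitrarily close to phi at a given point. *)

From HB Require Import structures.
From mathcomp Require Import all_boot all_order all_algebra.
From mathcomp Require Import all_classical all_reals all_analysis.
From mathcomp Require Import ring lra.
Import Order.TTheory GRing.Theory Num.Theory.
Import numFieldNormedType.Exports.
Local Open Scope classical_set_scope.
Local Open Scope ring_scope.

Section LinearFunctional.
Context {R : realType} {X : normedModType R} {f : X -> R^o}.
Hypothesis lf : is_linear_functional f.

Let F : {linear X -> R^o} := HB.pack f (GRing.isLinear.Build R X R^o *:%R f lf).

Lemma linear_functional0 : f 0 = 0. Proof. exact: (linear0 F). Qed.

Lemma linear_functionalN x : f (- x) = - f x. Proof. exact: (linearN F). Qed.

Lemma linear_functionalB x y : f (x - y) = f x - f y.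
Proof. exact: (linearB F). Qed.

Lemma linear_functionalZ a x : f (a *: x) = a * f x.
Proof. exact: (linearZZ F). Qed.

Lemma bounded_linear_functional_continuous C :
  (forall x, `|f x| <= C * `|x|) -> continuous f.
Proof.
move=> fC; apply: (@bounded_linear_continuous _ _ _ F); apply/linear_boundedP.
exists C; split=> [|r /ltW Cr x]; first exact: num_real.
by apply: le_trans (fC x) _; rewrite ler_wpM2r.
Qed.

Lemma continuous_linear_functional_bounded : continuous f ->
  exists2 C, 0 < C & forall x, `|f x| <= C * `|x|.
Proof.
move=> cf; have /linear_boundedP := @continuous_linear_bounded _ _ _ 0 F (cf 0).
exact: pinfty_ex_gt0.
Qed.

End LinearFunctional.

Section DualSpace.
Context {R : realType} {X : normedModType R}.
Implicit Types (f g : X -> R^o).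

Lemma scale_functionalE (s : R) f x : (s *: f) x = s * f x. Proof. by []. Qed.

Lemma dual_space_lin {f} : dual_space f -> is_linear_functional f.
Proof. by case. Qed.

Lemma dual_space_bounded {f} : dual_space f ->
  exists2 C, 0 < C & forall x, `|f x| <= C * `|x|.
Proof. by case=> lf; exact: continuous_linear_functional_bounded. Qed.

Lemma bounded_dual_space f C : is_linear_functional f ->
  (forall x, `|f x| <= C * `|x|) -> dual_space f.
Proof. by move=> lf fC; split=> //; exact: bounded_linear_functional_continuous fC. Qed.

Lemma dual_space0 : dual_space (0 : X -> R^o).
Proof.
apply: (@bounded_dual_space _ 0) => [a x y|x]; first by rewrite /= mulr0 addr0.
by rewrite normr0 mul0r.
Qed.

Lemma dual_spaceB {f g} : dual_space f -> dual_space g -> dual_space (f - g).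
Proof.
move=> df dg; have [C _ fC] := dual_space_bounded df.
have [C' _ gC] := dual_space_bounded dg.
apply: (@bounded_dual_space _ (C + C')) => [a x y|x]; rewrite !fctE.
  by rewrite (dual_space_lin df) (dual_space_lin dg); ring.
by rewrite mulrDl (le_trans (ler_normB _ _)) ?lerD.
Qed.

Lemma dual_spaceZ (s : R) {f} : dual_space f -> dual_space (s *: f).
Proof.
move=> df; have [C _ fC] := dual_space_bounded df.
apply: (@bounded_dual_space _ (`|s| * C)) => [a x y|x]; rewrite !scale_functionalE.
  by rewrite (dual_space_lin df); ring.
by rewrite normrM -mulrA ler_wpM2l.
Qed.

Lemma dual_spaceN {f} : dual_space f -> dual_space (- f).
Proof.
by move=> df; have := dual_spaceZ (-1) df; rewrite scaleN1r.
Qed.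

Let unit_ball_image f := [set `|f x| | x in [set x : X | `|x| <= 1]].

Let unit_ball_image_neq0 f : unit_ball_image f !=set0.
Proof. by exists `|f 0|, 0 => //=; rewrite normr0. Qed.

Let unit_ball_image_ubound {f} : dual_space f -> has_ubound (unit_ball_image f).
Proof.
move=> df; have [C C0 fC] := dual_space_bounded df.
by exists C => _ [x /= x1 <-]; rewrite (le_trans (fC x)) // ger_pMr.
Qed.

Lemma dual_norm_ge0 {f} : dual_space f -> 0 <= dual_norm f.
Proof.
move=> df; apply: le_trans (normr_ge0 (f 0)) _.
by apply: (ub_le_sup (unit_ball_image_ubound df)); exists 0 => //=; rewrite normr0.
Qed.

Lemma ler_dual_norm {f} x : dual_space f -> `|f x| <= dual_norm f * `|x|.
Proof.
move=> df; have lf := dual_space_lin df.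
have [->|x0] := eqVneq x 0.
  by rewrite (linear_functional0 lf) !normr0 mulr0.
have nx : 0 < `|x| by rewrite normr_gt0.
have : unit_ball_image f `|f (`|x|^-1 *: x)|.
  by exists (`|x|^-1 *: x) => //=; rewrite normrZ normfV normr_id mulVf ?gt_eqF.
move=> /(ub_le_sup (unit_ball_image_ubound df)).
by rewrite (linear_functionalZ lf) normrM normfV normr_id ler_pdivrMl // mulrC.
Qed.

Lemma dual_norm_le f C : 0 <= C -> (forall x, `|f x| <= C * `|x|) ->
  dual_norm f <= C.
Proof.
move=> C0 fC; apply: ge_sup; first exact: unit_ball_image_neq0.
by move=> _ [x /= x1 <-]; rewrite (le_trans (fC x)) // ler_piMr.
Qed.

Lemma dual_norm0 : dual_norm (0 : X -> R^o) = 0.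
Proof.
apply/le_anti; rewrite dual_norm_ge0 ?andbT; last exact: dual_space0.
by apply: dual_norm_le => // x; rewrite normr0 mul0r.
Qed.

Lemma dual_norm_gt {f r} : dual_space f -> r < dual_norm f ->
  exists2 x, `|x| <= 1 & r < f x.
Proof.
move=> df /(sup_gt (unit_ball_image_neq0 f)) [_ [x /= x1 <-]] rx.
have [fx0|fx0] := leP 0 (f x); first by exists x; rewrite // -(ger0_norm fx0).
by exists (- x); rewrite ?normrN // (linear_functionalN (dual_space_lin df)) -ltr0_norm.
Qed.

Lemma dual_normZ {f} (s : R) : dual_space f -> 0 < s ->
  dual_norm (s *: f) = s * dual_norm f.
Proof.
move=> df s0; apply/le_anti/andP; split.
  apply: dual_norm_le => [|x]; first by rewrite mulr_ge0 ?dual_norm_ge0 ?ltW.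
  rewrite scale_functionalE normrM gtr0_norm // -mulrA ler_pM2l //.
  exact: ler_dual_norm.
rewrite mulrC -ler_pdivlMr //; apply: dual_norm_le => [|x].
  by rewrite divr_ge0 ?(ltW s0) ?dual_norm_ge0 //; exact: dual_spaceZ.
have := ler_dual_norm x (dual_spaceZ s df).
by rewrite scale_functionalE normrM gtr0_norm // mulrAC ler_pdivlMr // mulrC.
Qed.

End DualSpace.

Section HahnBanach.
Context {R : realType} {V : lmodType R} (G : V -> R).
Hypothesis G_convex : forall x y (t : R), 0 < t < 1 ->
  G (t *: x + (1 - t) *: y) <= t * G x + (1 - t) * G y.
Hypothesis G0_ge0 : 0 <= G 0.

(* Partial linear functionals below G, encoded by their graphs. *)
Definition dominated_graph (A : set (V * R)) :=
  [/\ forall x q q', A (x, q) -> A (x, q') -> q = q',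
      forall a x y q q', A (x, q) -> A (y, q') -> A (a *: x + y, a * q + q') &
      forall x q, A (x, q) -> q <= G x].

Lemma dominated_graph_bigcup (F : set (set (V * R))) :
  F `<=` dominated_graph -> total_on F subset ->
  dominated_graph (\bigcup_(A in F) A).
Proof.
move=> FG Ftot; split.
- move=> x q q' [A FA Aq] [B FB Bq'].
  have [AB|BA] := Ftot A B FA FB.
    by have [+ _ _] := FG B FB; apply; [exact: AB Aq|].
  by have [+ _ _] := FG A FA; apply; [|exact: BA Bq'].
- move=> a x y q q' [A FA Aq] [B FB Bq'].
  have [AB|BA] := Ftot A B FA FB.
    by have [_ Blin _] := FG B FB; exists B => //; exact: Blin (AB _ Aq) Bq'.
  by have [_ Alin _] := FG A FA; exists A => //; exact: Alin Aq (BA _ Bq').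
- by move=> x q [A FA Aq]; have [_ _ +] := FG A FA; apply.
Qed.

Lemma dominated_graph00 A x q : dominated_graph A -> A (x, q) -> A (0, 0).
Proof.
case=> _ Alin _ Axq; have := Alin (-1) x x q q Axq Axq.
by rewrite scaleN1r addNr mulN1r addNr.
Qed.

Lemma dominated_graph_slope A v m q m' q' s t : dominated_graph A ->
  A (m, q) -> A (m', q') -> 0 < s -> 0 < t ->
  (q - G (m - s *: v)) / s <= (G (m' + t *: v) - q') / t.
Proof.
move=> hA Amq Amq' s0 t0; have [_ Alin Adom] := hA.
have st0 : 0 < s + t by rewrite addr_gt0.
set l := t / (s + t).
have l01 : 0 < l < 1 by rewrite divr_gt0 //= ltr_pdivrMr // mul1r ltrDr.
have mid : l *: m + ((1 - l) *: m' + 0) =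
    l *: (m - s *: v) + (1 - l) *: (m' + t *: v).
  have ls : l * s = (1 - l) * t by rewrite /l; field; rewrite gt_eqF.
  by rewrite addr0 !scalerDr scalerN !scalerA ls addrACA addNr addr0.
have A_mid : A (l *: (m - s *: v) + (1 - l) *: (m' + t *: v),
               l * q + ((1 - l) * q' + 0)).
  rewrite -mid; apply: (Alin) => //; apply: (Alin) => //.
  exact: dominated_graph00 Amq.
have e a b : (l * a + (1 - l) * b) * (s + t) = t * a + s * b.
  by rewrite /l; field; rewrite gt_eqF.
have := le_trans (Adom _ _ A_mid) (G_convex _ _ _ l01).
rewrite addr0 => /(ler_wpM2r (ltW st0)); rewrite !e => key.
rewrite ler_pdivrMr // mulrAC ler_pdivlMr //; lra.
Qed.

Lemma dominated_graph_interpolate A v : dominated_graph A -> A (0, 0) ->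
  exists r, forall m q s, A (m, q) -> 0 < s ->
    (q - G (m - s *: v)) / s <= r /\ r <= (G (m + s *: v) - q) / s.
Proof.
move=> hA A00.
pose L := [set y | exists m q s,
  [/\ A (m, q), 0 < s & y = (q - G (m - s *: v)) / s]].
have L_ub y m q s : L y -> A (m, q) -> 0 < s -> y <= (G (m + s *: v) - q) / s.
  move=> [m0 [q0 [s0 [Amq0 s0_gt0 ->]]]] Amq s_gt0.
  exact: dominated_graph_slope Amq0 Amq s0_gt0 s_gt0.
have L0 : L ((0 - G (0 - 1 *: v)) / 1) by exists 0, 0, 1.
exists (sup L) => m q s Amq s0; split.
  apply: ub_le_sup; last by exists m, q, s.
  by exists ((G (0 + 1 *: v) - 0) / 1) => y Ly; exact: L_ub Ly A00 ltr01.
apply: ge_sup => [|y Ly]; first by exists ((0 - G (0 - 1 *: v)) / 1).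
exact: L_ub Ly Amq s0.
Qed.

Definition graph_extension (A : set (V * R)) v r : set (V * R) :=
  [set p | exists m q t, A (m, q) /\ p = (m + t *: v, q + t * r)].

Lemma dominated_graph_extension A v r : dominated_graph A -> A (0, 0) ->
  (forall q, ~ A (v, q)) ->
  (forall m q s, A (m, q) -> 0 < s ->
    (q - G (m - s *: v)) / s <= r /\ r <= (G (m + s *: v) - q) / s) ->
  dominated_graph (graph_extension A v r).
Proof.
move=> [Afun Alin Adom] A00 nAv hr; split.
- move=> x q1 q2 [m [q [t [Amq [-> ->]]]]] [m' [q' [t' [Amq' [ex ->]]]]].
  have [tt'|ntt'] := eqVneq t t'.
    by move: ex; rewrite tt' => /addIr mm; rewrite (Afun m q q' Amq) // mm.
  have Av := Alin ((t' - t)^-1) _ _ _ _ (Alin (-1) _ _ _ _ Amq' Amq) A00.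
  suff ev : (t' - t)^-1 *: (-1 *: m' + m) + 0 = v by rewrite ev in Av; case: (nAv _ Av).
  have -> : m = m' + t' *: v - t *: v by rewrite -ex addrK.
  rewrite addr0 scaleN1r addrA addKr -scalerBl scalerA mulVf ?scale1r //.
  by rewrite subr_eq0 eq_sym.
- move=> a x y q1 q2 [m [q [t [Amq [-> ->]]]]] [m' [q' [t' [Amq' [-> ->]]]]].
  exists (a *: m + m'), (a * q + q'), (a * t + t'); split; first exact: Alin.
  congr pair; last by ring.
  by rewrite scalerDr scalerDl scalerA addrACA.
- move=> x q1 [m [q [t [Amq [-> ->]]]]].
  have [t_lt0|t_gt0|->] := ltgtP t 0.
  + have nt_gt0 : 0 < - t by rewrite oppr_gt0.
    have [+ _] := hr m q (- t) Amq nt_gt0.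
    by rewrite scaleNr opprK ler_pdivrMr // => h; lra.
  + have [_] := hr m q t Amq t_gt0; rewrite ler_pdivlMr // => h; lra.
  + by rewrite scale0r mul0r !addr0; exact: Adom.
Qed.

Lemma convex_linear_minorant : exists f : V -> R,
  (forall a x y, f (a *: x + y) = a * f x + f y) /\ forall x, f x <= G x.
Proof.
have [A [hA Amax]] := Zorn_bigcup dominated_graph_bigcup.
have A00 : A (0, 0).
  apply: contrapT => nA00; apply: (Amax [set (0, 0)]).
    split=> [p Ap|/(_ (0, 0) erefl)//].
    by case: nA00; case: p Ap => x q; exact: dominated_graph00.
  split=> [x q q' [_ ->] [_ ->]//|a x y q q' [-> ->] [-> ->]|x q [-> ->]//].
  by rewrite scaler0 mulr0 !addr0.
have [Afun Alin Adom] := hA.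
have Atotal v : exists q, A (v, q).
  apply: contrapT => /forallNP nAv.
  have [r hr] := dominated_graph_interpolate A v hA A00.
  apply: (Amax (graph_extension A v r)); last exact: dominated_graph_extension.
  split=> [[m q] Amq|sub]; first by exists m, q, 0; rewrite scale0r mul0r !addr0.
  by apply: (nAv r); apply: sub; exists 0, 0, 1; rewrite add0r scale1r mul1r add0r.
pose f v := sval (cid (Atotal v)).
have Af v : A (v, f v) by exact: svalP (cid (Atotal v)).
exists f; split=> [a x y|x]; last exact: Adom.
exact: Afun (Af _) (Alin a _ _ _ _ (Af x) (Af y)).
Qed.

End HahnBanach.

Section Conjugate.
Context {R : realType} {X : normedModType R} (phi : X -> \bar R).

Lemma fenchel_young (f : X -> R^o) x : ((f x)%:E - phi x <= conjugate phi f)%E.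
Proof. by apply: ereal_sup_ubound; exists x. Qed.

Lemma conjugate_le (f : X -> R^o) (b : R) : (forall x, phi x != -oo%E) ->
  (forall x, phi x \is a fin_num -> f x - fine (phi x) <= b) ->
  (conjugate phi f <= b%:E)%E.
Proof.
move=> phi_nNy fb; apply: ge_ereal_sup => _ [x _ <-].
have := phi_nNy x; case E: (phi x) => [p| |] // _; last by rewrite leNye.
by have := fb x; rewrite E lee_fin; apply.
Qed.

Lemma fenchel_young_lt (f : X -> R^o) x (a : R) :
  (a%:E < (f x)%:E - conjugate phi f)%E -> (a%:E < phi x)%E.
Proof.
have := fenchel_young f x.
case: (phi x) => [p| |]; last 2 first.
- by move=> _ _; exact: ltry.
- by rewrite /= leye_eq => /eqP ->.
case: (conjugate phi f) => [c| |] //; rewrite -!EFinB !lee_fin !lte_fin; lra.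
Qed.

End Conjugate.

(* [inf] is junk on sets that are not bounded below; the cone minorant
   [phi_ge] of the section below rules this out. *)
Definition pasch_hausdorff {R : realType} {X : normedModType R}
    (phi : X -> \bar R) (k : R) (x : X) : R :=
  inf [set fine (phi y) + k * `|x - y| | y in [set y | phi y \is a fin_num]].

Section PaschHausdorff.
Context {R : realType} {X : normedModType R} {phi : X -> \bar R}.
Context {x1 : X} {c K k : R}.
Hypotheses (K_ge0 : 0 <= K) (Kk : K <= k) (phi_x1 : phi x1 \is a fin_num).
Hypothesis phi_ge : forall y, ((c - K * `|y - x1|)%:E <= phi y)%E.

Local Notation g := (pasch_hausdorff phi k).

Let k_ge0 : 0 <= k. Proof. exact: le_trans Kk. Qed.

Let envelope_lbound x : has_lbound
  [set fine (phi y) + k * `|x - y| | y in [set y | phi y \is a fin_num]].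
Proof.
exists (c - K * `|x - x1|) => _ [y fy <-].
have := phi_ge y; rewrite -(fineK fy) lee_fin.
have : `|y - x1| <= `|x - y| + `|x - x1| by rewrite (distrC x y) ler_distD.
move=> /(ler_wpM2l K_ge0); have : K * `|x - y| <= k * `|x - y| by rewrite ler_wpM2r.
lra.
Qed.

Lemma pasch_hausdorff_le x {y} : phi y \is a fin_num ->
  g x <= fine (phi y) + k * `|x - y|.
Proof. by move=> fy; apply: (ge_inf (envelope_lbound x)); exists y. Qed.

Lemma pasch_hausdorff_ge_affine x l t b : 0 < t ->
  (forall y, phi y \is a fin_num -> l <= t * (fine (phi y) + k * `|x - y|) + b) ->
  l <= t * g x + b.
Proof.
move=> t0 hl; rewrite -lerBlDr -ler_pdivrMl //.
apply: lb_le_inf => [|_ [y fy <-]]; first by exists (fine (phi x1) + k * `|x - x1|), x1.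
by rewrite ler_pdivrMl // lerBlDr; exact: hl.
Qed.

Lemma pasch_hausdorff_lipschitz x x' : g x <= g x' + k * `|x - x'|.
Proof.
rewrite -[g x']mul1r; apply: pasch_hausdorff_ge_affine => // y fy.
rewrite mul1r (le_trans (pasch_hausdorff_le x fy)) // -addrA lerD2l -mulrDr.
by apply: ler_wpM2l => //; rewrite [leRHS]addrC ler_distD.
Qed.

Lemma pasch_hausdorff_convex : convex_on setT phi -> (forall x, phi x != -oo%E) ->
  forall x x' t, 0 < t < 1 ->
  g (t *: x + (1 - t) *: x') <= t * g x + (1 - t) * g x'.
Proof.
move=> phi_cvx phi_nNy x x' t /[dup] t01 /andP[t0 t1].
have t'0 : 0 < 1 - t by rewrite subr_gt0.
set w := t *: x + (1 - t) *: x'.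
have key y y' : phi y \is a fin_num -> phi y' \is a fin_num ->
    g w <= t * (fine (phi y) + k * `|x - y|) +
           (1 - t) * (fine (phi y') + k * `|x' - y'|).
  move=> fy fy'; set z := t *: y + (1 - t) *: y'.
  have := phi_cvx y y' t I I t01; rewrite -(fineK fy) -(fineK fy') -!EFinM -EFinD -/z.
  have := phi_nNy z; case E: (phi z) => [p| |] // _; rewrite lee_fin => pz.
  have wz : `|w - z| <= t * `|x - y| + (1 - t) * `|x' - y'|.
    rewrite /w /z opprD addrACA -!scalerBr (le_trans (ler_normD _ _)) //.
    by rewrite !normrZ !gtr0_norm.
  have fz : phi z \is a fin_num by rewrite E.
  have := pasch_hausdorff_le w fz; rewrite E /=.
  have := ler_wpM2l k_ge0 wz; nra.
rewrite addrC; apply: pasch_hausdorff_ge_affine => // y' fy'.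
rewrite addrC; apply: pasch_hausdorff_ge_affine => // y fy.
exact: key.
Qed.

Lemma pasch_hausdorff_ge_level x0 a d : 0 < d ->
  (forall w, `|w - x0| < d -> (a%:E < phi w)%E) ->
  a - c + K * `|x0 - x1| <= (k - K) * d -> a <= g x0.
Proof.
move=> d0 phi_gt hk; rewrite -[g x0]addr0 -[g x0]mul1r.
apply: pasch_hausdorff_ge_affine => // y fy; rewrite mul1r addr0 distrC.
have : 0 <= k * `|y - x0| by rewrite mulr_ge0.
have [yx0|yx0] := ltP `|y - x0| d.
  by have := phi_gt y yx0; rewrite -(fineK fy) lte_fin; lra.
have := phi_ge y; rewrite -(fineK fy) lee_fin.
have /(ler_wpM2l K_ge0) : `|y - x1| <= `|y - x0| + `|x0 - x1| by exact: ler_distD.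
have : (k - K) * d <= (k - K) * `|y - x0| by rewrite ler_wpM2l // subr_ge0.
lra.
Qed.

End PaschHausdorff.

Lemma lipschitz_convex_subgradient {R : realType} {X : normedModType R}
    (g : X -> R) (k : R) (x0 : X) :
  (forall x y t, 0 < t < 1 -> g (t *: x + (1 - t) *: y) <= t * g x + (1 - t) * g y) ->
  (forall x x', g x <= g x' + k * `|x - x'|) ->
  exists2 f : X -> R^o, dual_space f & forall x, f (x - x0) <= g x - g x0.
Proof.
move=> g_cvx g_lip; pose G v := g (x0 + v) - g x0.
have G_cvx x y t : 0 < t < 1 -> G (t *: x + (1 - t) *: y) <= t * G x + (1 - t) * G y.
  move=> t01; have := g_cvx (x0 + x) (x0 + y) t t01.
  by rewrite !scalerDr addrACA -scalerDl subrKC scale1r /G; lra.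
have G0 : 0 <= G 0 by rewrite /G addr0 subrr.
have [f [lf fG]] := @convex_linear_minorant _ _ G G_cvx G0.
have G_le v : G v <= k * `|v|.
  by rewrite /G lerBlDl (le_trans (g_lip _ x0)) // addrAC subrr add0r addrC.
exists f => [|x]; last by have := fG (x - x0); rewrite /G subrKC.
apply: (@bounded_dual_space _ _ _ k) => // v.
rewrite ler_norml (le_trans (fG v)) // andbT lerNl -(linear_functionalN lf).
by rewrite (le_trans (fG _)) // (le_trans (G_le _)) ?normrN.
Qed.

Lemma norming_functional {R : realType} {X : normedModType R} (x : X) :
  exists2 f : X -> R^o, dual_space f & dual_norm f <= 1 /\ f x = `|x|.
Proof.
have norm_cvx (y z : X) (t : R) : 0 < t < 1 ->
    `|t *: y + (1 - t) *: z| <= t * `|y| + (1 - t) * `|z|.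
  move=> /andP[t0 t1]; rewrite (le_trans (ler_normD _ _)) // !normrZ.
  by rewrite !gtr0_norm ?subr_gt0.
have norm_lip (y z : X) : `|y| <= `|z| + 1 * `|y - z|.
  by rewrite mul1r -{1}(subrKC z y) ler_normD.
have [f df fx] := @lipschitz_convex_subgradient _ _ _ _ x norm_cvx norm_lip.
have lf := dual_space_lin df.
have f_le y : f y <= `|y|.
  by have := fx (y + x); rewrite addrK => /le_trans; apply; rewrite lerBlDr ler_normD.
exists f => //; split.
  apply: dual_norm_le => // y; rewrite mul1r ler_norml f_le andbT.
  by rewrite lerNl -(linear_functionalN lf) -[`|y|]normrN f_le.
apply/le_anti; rewrite f_le /=.
by have := fx 0; rewrite sub0r normr0 sub0r (linear_functionalN lf) lerN2.
Qed.

Section FenchelMoreau.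
Context {R : realType} {X : normedModType R} (phi : X -> \bar R).
Hypotheses (phi_cvx : convex_on setT phi)
  (phi_lsc : lsc_on setT (fun x : X => `|x|) phi) (phi_proper : proper_on setT phi).

Let phi_nNy x : phi x != -oo%E. Proof. by case: phi_proper => + _; apply. Qed.

Lemma proper_lsc_convex_cone_minorant : exists x1 c K, [/\ 0 <= K,
  phi x1 \is a fin_num & forall y, ((c - K * `|y - x1|)%:E <= phi y)%E].
Proof.
have [_ [x1 [_ phi_x1]]] := phi_proper.
have fx1 : phi x1 \is a fin_num by rewrite fin_numE phi_x1 phi_nNy.
set m := fine (phi x1).
have [d d0 ball] : exists2 d : R, 0 < d &
    forall y, `|y - x1| < d -> ((m - 1)%:E < phi y)%E.
  have [|d d0 ball] := phi_lsc x1 I (m - 1); last by exists d => // y; exact: ball.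
  by rewrite -(fineK fx1) lte_fin ltrBlDr ltrDl.
exists x1, (m - 1), (2 / d); split=> // [|y]; first by rewrite ltW ?divr_gt0.
have [yx1|yx1] := ltP `|y - x1| d.
  apply/ltW/(le_lt_trans _ (ball y yx1)).
  by rewrite lee_fin lerBlDr lerDl mulr_ge0 // ltW // divr_gt0.
set r := `|y - x1|; have r0 : 0 < r := lt_le_trans d0 yx1.
set s := d / (2 * r).
have s_gt0 : 0 < s by rewrite divr_gt0 // mulr_gt0.
have s01 : 0 < s < 1.
  by rewrite s_gt0 ltr_pdivrMr ?mulr_gt0 // mul1r (le_lt_trans yx1) // ltr_pMl ?ltr1n.
have : `|s *: y + (1 - s) *: x1 - x1| < d.
  have -> : s *: y + (1 - s) *: x1 - x1 = s *: (y - x1).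
    by rewrite scalerBl scale1r scalerBr addrA addrAC addrK.
  rewrite normrZ gtr0_norm // -/r.
  by rewrite /s mulrAC -mulf_div divff ?gt_eqF // mulr1 ltr_pdivrMr // ltr_pMr ?ltr1n.
move=> /ball /lt_le_trans /(_ (phi_cvx y x1 s I I s01)).
rewrite -(fineK fx1) -/m; have := phi_nNy y.
case: (phi y) => [p| |] //= _; last by rewrite leey.
rewrite -!EFinM -EFinD !lte_fin lee_fin => h.
have inv_s : 2 / d * r = s^-1 by rewrite /s invf_div mulrAC.
rewrite inv_s -(ler_pM2l s_gt0) mulrBr mulrDr mulfV ?gt_eqF //; lra.
Qed.

Lemma fenchel_moreau_lt x0 (a : R) : (a%:E < phi x0)%E ->
  exists2 f : X -> R^o, dual_space f & (a%:E < (f x0)%:E - conjugate phi f)%E.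
Proof.
move=> a_lt.
have [a' aa' a'_lt] : exists2 a', a < a' & (a'%:E < phi x0)%E.
  move: a_lt; have := phi_nNy x0; case: (phi x0) => [p| |] // _.
    by rewrite lte_fin => ap; exists ((a + p) / 2); rewrite ?lte_fin; lra.
  by exists (a + 1); rewrite ?ltry ?ltrDl.
have [d d0 phi_gt] := phi_lsc x0 I a' a'_lt.
have [x1 [c [K [K_ge0 fx1 phi_ge]]]] := proper_lsc_convex_cone_minorant.
set k := K + `|a' - c + K * `|x0 - x1| | / d.
have Kk : K <= k by rewrite lerDl divr_ge0 // ltW.
have hk : a' - c + K * `|x0 - x1| <= (k - K) * d.
  by rewrite /k [K + _]addrC addrK divfK ?gt_eqF // ler_norm.
pose g := pasch_hausdorff phi k.
have [f df fg] := @lipschitz_convex_subgradient _ _ _ _ x0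
  (pasch_hausdorff_convex K_ge0 Kk fx1 phi_ge phi_cvx phi_nNy)
  (pasch_hausdorff_lipschitz K_ge0 Kk fx1 phi_ge).
exists f => //.
have gx0 : a' <= g x0.
  apply: (pasch_hausdorff_ge_level K_ge0 Kk fx1 phi_ge _ _ _ d0 _ hk) => w.
  exact: phi_gt.
have : (conjugate phi f <= (f x0 - g x0)%:E)%E.
  apply: conjugate_le => // x fx.
  have := pasch_hausdorff_le K_ge0 Kk phi_ge x fx.
  have := fg x; rewrite (linear_functionalB (dual_space_lin df)) subrr normr0 mulr0.
  lra.
case: (conjugate phi f) => [q| |] //; last by rewrite ltry.
by rewrite lee_fin -EFinB lte_fin => ?; lra.
Qed.

End FenchelMoreau.

Section ConjugateProperties.
Context {R : realType} {X : normedModType R} (phi : X -> \bar R).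

Lemma conjugate_even : even_on setT phi -> even_on dual_space (conjugate phi).
Proof.
move=> phi_even z dz; have lz := dual_space_lin dz.
apply/le_anti/andP; split; apply: ge_ereal_sup => _ [x _ <-];
  apply: ereal_sup_ubound; exists (- x) => //.
  by rewrite (linear_functionalN lz) phi_even.
by rewrite opprfctE (linear_functionalN lz) opprK phi_even.
Qed.

Lemma conjugate_convex : convex_on dual_space (conjugate phi).
Proof.
move=> z w t _ _ /andP[t0 t1]; apply: ge_ereal_sup => _ [x _ <-].
have -> : (t *: z + (1 - t) *: w) x = t * z x + (1 - t) * w x by [].
have t'0 : 0 < 1 - t by rewrite subr_gt0.
apply: (@le_trans _ _ (t%:E * ((z x)%:E - phi x) + (1 - t)%:E * ((w x)%:E - phi x))%E).
  case: (phi x) => [p| |] /=; last by rewrite !gt0_muley ?lte_fin.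
    by rewrite -!EFinB -!EFinM -EFinD lee_fin; lra.
  by rewrite leNye.
apply: leeD; apply: lee_wpmul2l; rewrite ?fenchel_young //.
  by rewrite lee_fin ltW.
by rewrite lee_fin ltW.
Qed.

Lemma conjugate_lsc : lsc_on dual_space dual_norm (conjugate phi).
Proof.
move=> z dz a /ereal_sup_gt [_ [x _ <-]].
case E: (phi x) => [p| |] /=; last 2 first.
- by rewrite ltNge leNye.
- exists 1 => // w _ _; apply: lt_le_trans (fenchel_young phi w x).
  by rewrite E /= ltry.
rewrite -EFinB lte_fin => ax.
have x1_gt0 : 0 < `|x| + 1 by rewrite ltr_wpDl.
exists ((z x - p - a) / (`|x| + 1)) => [|w dw wz]; first by rewrite divr_gt0 ?subr_gt0.
apply: lt_le_trans (fenchel_young phi w x); rewrite E -EFinB lte_fin.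
have : `|(w - z) x| <= dual_norm (w - z) * `|x| by exact/ler_dual_norm/dual_spaceB.
have : dual_norm (w - z) * `|x| < z x - p - a.
  apply: le_lt_trans (ler_wpM2r (normr_ge0 x) (ltW wz)) _.
  by rewrite mulrAC ltr_pdivrMr // ltr_pM2l ?subr_gt0 // ltrDl.
rewrite opprfctE /= => ? ?.
have := ler_norm (z x - w x); rewrite distrC; lra.
Qed.

Hypotheses (phi_cvx : convex_on setT phi)
  (phi_lsc : lsc_on setT (fun x : X => `|x|) phi) (phi_proper : proper_on setT phi).

Lemma conjugate_proper : proper_on dual_space (conjugate phi).
Proof.
have [phi_nNy [x1 [_ phi_x1]]] := phi_proper.
have fx1 : phi x1 \is a fin_num by rewrite fin_numE phi_x1 phi_nNy.
split=> [z _|].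
  by have := fenchel_young phi z x1; rewrite -(fineK fx1); case: conjugate.
have /fenchel_moreau_lt[//|//|//|f df] : ((fine (phi x1) - 1)%:E < phi x1)%E.
  by rewrite -(fineK fx1) lte_fin ltrBlDr ltrDl.
by move=> ineq; exists f; split=> //; move: ineq; case: conjugate.
Qed.

Lemma even_of_conjugate_even : even_on dual_space (conjugate phi) -> even_on setT phi.
Proof.
move=> conj_even.
suff phiN_le (x : X) : (phi (- x)%R <= phi x)%E.
  by move=> x _; apply/le_anti/andP; split; [|have := phiN_le (- x); rewrite opprK].
have [phi_nNy _] := phi_proper; have := phi_nNy x I.
case E: (phi x) => [p| |] // _; last by rewrite leey.
rewrite leNgt; apply/negP => /fenchel_moreau_lt[//|//|//|f df].
rewrite -conj_even // (linear_functionalN (dual_space_lin df)) => /fenchel_young_lt.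
by rewrite E ltxx.
Qed.

End ConjugateProperties.

Section OrliczGeneric.
Context {R : realType} {V : lmodType R} {D : set V} {N : V -> R} {psi : V -> \bar R}.

Lemma lim0_on_eq0 : lim0_on D N psi -> D 0 -> N 0 = 0 -> psi 0 = 0%E.
Proof.
move=> psi_lim0 D0 N0.
have psi0_near e : 0 < e -> (- e%:E < psi 0 < e%:E)%E.
  by move=> e0; have [d d0 /(_ 0 D0)] := psi_lim0 e e0; rewrite N0 => /(_ d0) [-> ->].
case E: (psi 0) => [p| |]; last 2 first.
- by have /andP[_] := psi0_near 1 ltr01; rewrite E ltNge leey.
- by have /andP[] := psi0_near 1 ltr01; rewrite E ltNge leNye.
apply/eqP; rewrite eqe; apply: contraT => p0.
have /psi0_near : 0 < `|p| by rewrite normr_gt0.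
by rewrite E -EFinN !lte_fin -ltr_norml ltxx.
Qed.

Lemma even_convex_ge0 z : even_on D psi -> convex_on D psi -> psi 0 = 0%E ->
  D z -> D (- z) -> psi z != -oo%E -> (0 <= psi z)%E.
Proof.
move=> psi_even psi_cvx psi0 Dz DNz.
have t01 : 0 < (2^-1 : R) < 1 by rewrite invr_gt0 ltr0n invf_lt1 ?ltr1n.
have := psi_cvx z (- z) _ Dz DNz t01.
have -> : 1 - 2^-1 = 2^-1 :> R by field.
rewrite scalerN subrr psi0 psi_even //.
case: (psi z) => [p| |] //=; rewrite -EFinM -EFinD !lee_fin => ? _; lra.
Qed.

Lemma convex_coercive_ge_norm (r : R) : convex_on D psi -> D 0 -> psi 0 = 0%E ->
  (forall v, D v -> (0 <= psi v)%E) ->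
  (forall v s, D v -> 0 < s -> D (s *: v) /\ N (s *: v) = s * N v) ->
  (forall v, D v -> r < N v -> (1%:E < psi v)%E) ->
  forall v, D v -> ((N v / (`|r| + 1) - 1)%:E <= psi v)%E.
Proof.
move=> psi_cvx D0 psi0 psi_ge0 N_homo psi_coer v Dv.
set R0 := `|r| + 1; have R00 : 0 < R0 by rewrite ltr_wpDl.
have [NvR0|R0Nv] := leP (N v) R0.
  by apply: le_trans (psi_ge0 v Dv); rewrite lee_fin subr_le0 ler_pdivrMr // mul1r.
have Nv0 : 0 < N v := lt_trans R00 R0Nv.
set s := R0 / N v; have s0 : 0 < s by rewrite divr_gt0.
have s01 : 0 < s < 1 by rewrite s0 ltr_pdivrMr // mul1r.
have [Dsv Nsv] := N_homo v s Dv s0.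
have : (1%:E < psi (s *: v))%E.
  apply: psi_coer Dsv _; rewrite Nsv /s divfK ?gt_eqF //.
  by rewrite (le_lt_trans (ler_norm r)) // ltrDl.
have := psi_cvx v 0 s Dv D0 s01; rewrite scaler0 addr0 psi0 mule0 adde0.
move=> /[swap] /lt_le_trans /[apply].
have := psi_ge0 v Dv; case: (psi v) => [p| |] // _; last by rewrite leey.
rewrite -EFinM !lte_fin lee_fin => sp.
have : s^-1 < p by rewrite -(ltr_pM2l s0) mulfV ?gt_eqF.
rewrite /s invf_div; lra.
Qed.

Lemma Orlicz_ge0 : Orlicz_on D N psi -> D 0 -> N 0 = 0 ->
  (forall z, D z -> D (- z)) -> forall z, D z -> (0 <= psi z)%E.
Proof.
case=> psi_even [psi_cvx [_ [[psi_nNy _] [psi_lim0 _]]]] D0 N0 DN z Dz.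
apply: even_convex_ge0 => //; [exact: lim0_on_eq0 | exact: DN | exact: psi_nNy].
Qed.

Lemma Orlicz_ge_norm : Orlicz_on D N psi -> D 0 -> N 0 = 0 ->
  (forall z, D z -> D (- z)) ->
  (forall v s, D v -> 0 < s -> D (s *: v) /\ N (s *: v) = s * N v) ->
  exists2 R0, 0 < R0 & forall v, D v -> ((N v / R0 - 1)%:E <= psi v)%E.
Proof.
move=> psiO D0 N0 DN N_homo; have [_ [psi_cvx [_ [_ [psi_lim0 psi_coer]]]]] := psiO.
have [r r_coer] := psi_coer 1; exists (`|r| + 1); first by rewrite ltr_wpDl.
by apply: convex_coercive_ge_norm; rewrite ?lim0_on_eq0 //; exact: Orlicz_ge0.
Qed.

End OrliczGeneric.

Lemma small_pairing_bound {R : realType} {R0 e : R} : 0 < R0 -> 0 < e ->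
  exists2 d : R, 0 < d & forall u w p : R, 0 <= u -> u <= d -> 0 <= w ->
    0 <= p -> w <= R0 * (p + 1) -> u * w - p <= e / 2.
Proof.
move=> R00 e0; pose d := Order.min (e / (4 * R0)) (1 / (2 * R0)).
exists d => [|u w p u0 ud w0 p0 wp]; first by rewrite lt_min !divr_gt0 ?mulr_gt0.
have d4 : 4 * R0 * d <= e.
  by rewrite mulrC -ler_pdivlMr ?mulr_gt0 // ge_min lexx.
have d2 : 2 * R0 * d <= 1.
  by rewrite mulrC -ler_pdivlMr ?mulr_gt0 // ge_min lexx orbT.
have : u * w <= d * w by rewrite ler_wpM2r.
have [w_le|w_gt] := leP w (2 * R0).
  have : d * w <= d * (2 * R0) by rewrite ler_wpM2l // (le_trans u0).
  nra.
have : d * w * (2 * R0) <= w by nra.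
nra.
Qed.

Section OrliczConjugate.
Context {R : realType} {X : normedModType R} (phi : X -> \bar R).
Hypothesis phi_Orlicz : Orlicz_on setT (fun x : X => `|x|) phi.

Let phi_nNy x : phi x != -oo%E.
Proof. by have [_ [_ [_ [[+ _] _]]]] := phi_Orlicz; apply. Qed.

Let phi_ge0 x : (0 <= phi x)%E.
Proof. by apply: (Orlicz_ge0 phi_Orlicz) => //; rewrite normr0. Qed.

Let conjugate_ge0 {z} : dual_space z -> (0 <= conjugate phi z)%E.
Proof.
move=> dz; apply: le_trans (fenchel_young phi z 0).
have [_ [_ [_ [_ [phi_lim0 _]]]]] := phi_Orlicz.
rewrite (lim0_on_eq0 phi_lim0) ?normr0 //.
by rewrite (linear_functional0 (dual_space_lin dz)) subee.
Qed.

Lemma conjugate_lim0_of_Orlicz : lim0_on dual_space dual_norm (conjugate phi).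
Proof.
move=> e e0.
have [R0 R00 phi_ge] : exists2 R0, 0 < R0 & forall x, ((`|x| / R0 - 1)%:E <= phi x)%E.
  have [|R0 R00 phi_ge] := Orlicz_ge_norm phi_Orlicz I (@normr0 _ X) (fun _ _ => I).
    by move=> v s _ s0; rewrite normrZ gtr0_norm.
  by exists R0 => // x; exact: phi_ge.
have [d d0 small] := small_pairing_bound R00 e0.
exists d => // z dz zd; split.
  by apply: (lt_le_trans _ (conjugate_ge0 dz)); rewrite lte_fin oppr_lt0.
apply: (@le_lt_trans _ _ (e / 2)%:E); last by rewrite lte_fin; lra.
apply: conjugate_le => // x fx.
set p := fine (phi x); have p0 : 0 <= p by rewrite -lee_fin fineK.
have xp : `|x| <= R0 * (p + 1).
  by have := phi_ge x; rewrite -(fineK fx) lee_fin lerBlDr ler_pdivrMr // mulrC.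
have := small _ _ _ (dual_norm_ge0 dz) (ltW zd) (normr_ge0 x) p0 xp.
have := ler_dual_norm x dz; have := ler_norm (z x); lra.
Qed.

Lemma conjugate_coercive_of_Orlicz : coercive_on dual_space dual_norm (conjugate phi).
Proof.
move=> M; have [_ [_ [_ [_ [phi_lim0 _]]]]] := phi_Orlicz.
have [d d0 phi_small] := phi_lim0 1 ltr01.
exists (2 * (`|M| + 1) / d) => z dz zM.
have [x x1 Mx] := dual_norm_gt dz zM.
have d2 : 0 < d / 2 by rewrite divr_gt0.
set y := (d / 2) *: x.
have [_ phi_y] : (- 1%:E < phi y)%E /\ (phi y < 1%:E)%E.
  apply: phi_small => //; rewrite normrZ gtr0_norm //.
  by rewrite (le_lt_trans (ler_piMr _ x1)) ?ltW // ltr_pdivrMr // ltr_pMr ?ltr1n.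
apply: (lt_le_trans _ (fenchel_young phi z y)).
move: phi_y; have := phi_nNy y; case: (phi y) => [q| |] // _.
rewrite /y (linear_functionalZ (dual_space_lin dz)) -EFinB !lte_fin => q_lt1.
have : d / 2 * (2 * (`|M| + 1) / d) < d / 2 * z x by rewrite ltr_pM2l.
have -> : d / 2 * (2 * (`|M| + 1) / d) = `|M| + 1 by field; rewrite gt_eqF.
have := ler_norm M; lra.
Qed.

Theorem Orlicz_conjugate : Orlicz_on dual_space dual_norm (conjugate phi).
Proof.
have [phi_even [phi_cvx [phi_lsc [phi_proper _]]]] := phi_Orlicz.
split; first exact: conjugate_even.
split; first exact: conjugate_convex.
split; first exact: conjugate_lsc.
split; first exact: conjugate_proper.
split; [exact: conjugate_lim0_of_Orlicz | exact: conjugate_coercive_of_Orlicz].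
Qed.

End OrliczConjugate.

Section OrliczOfConjugate.
Context {R : realType} {X : normedModType R} (phi : X -> \bar R).
Hypotheses (phi_cvx : convex_on setT phi)
  (phi_lsc : lsc_on setT (fun x : X => `|x|) phi) (phi_proper : proper_on setT phi).
Hypothesis conj_Orlicz : Orlicz_on dual_space dual_norm (conjugate phi).

Let phi_nNy x : phi x != -oo%E. Proof. by case: phi_proper => + _; apply. Qed.

Let conjugate_ge0 {f} : dual_space f -> (0 <= conjugate phi f)%E.
Proof. exact: (Orlicz_ge0 conj_Orlicz dual_space0 dual_norm0 (@dual_spaceN _ _)). Qed.

Let phi_ge0 x : (0 <= phi x)%E.
Proof.
have [_ [_ [_ [_ [conj_lim0 _]]]]] := conj_Orlicz.
have := fenchel_young phi 0 x; rewrite (lim0_on_eq0 conj_lim0 dual_space0 dual_norm0).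
have -> : (0 : X -> R^o) x = 0 by [].
by have := phi_nNy x; case: (phi x) => [p| |] //= _; rewrite -EFinB !lee_fin; lra.
Qed.

Lemma lim0_of_Orlicz_conjugate : lim0_on setT (fun x : X => `|x|) phi.
Proof.
move=> e e0.
have [R0 R00 conj_ge] := Orlicz_ge_norm conj_Orlicz dual_space0 dual_norm0
  (@dual_spaceN _ _) (fun f s df s0 => conj (dual_spaceZ s df) (dual_normZ s df s0)).
have [d d0 small] := small_pairing_bound R00 e0.
exists d => // x _ xd; split.
  by apply: (lt_le_trans _ (phi_ge0 x)); rewrite lte_fin oppr_lt0.
rewrite ltNge; apply/negP => e_le.
have /fenchel_moreau_lt[//|//|//|f df] : ((e / 2)%:E < phi x)%E.
  by apply: lt_le_trans e_le; rewrite lte_fin; lra.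
have := conj_ge f df; have := conjugate_ge0 df.
case: (conjugate phi f) => [p| |] //; rewrite -EFinB !lee_fin lte_fin => p0 c_ge ex.
have fR0 : dual_norm f <= R0 * (p + 1).
  by move: c_ge; rewrite lerBlDr ler_pdivrMr // mulrC.
have := small _ _ _ (normr_ge0 x) (ltW xd) (dual_norm_ge0 df) p0 fR0.
have := ler_dual_norm x df; have := ler_norm (f x); lra.
Qed.

Lemma coercive_of_Orlicz_conjugate : coercive_on setT (fun x : X => `|x|) phi.
Proof.
move=> M; have [_ [_ [_ [_ [conj_lim0 _]]]]] := conj_Orlicz.
have [d d0 conj_small] := conj_lim0 1 ltr01.
exists (2 * (`|M| + 1) / d) => x _ xM.
have [f df [f1 fx]] := norming_functional x.
have d2 : 0 < d / 2 by rewrite divr_gt0.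
have [_ conj_lt1] : (- 1%:E < conjugate phi ((d / 2) *: f))%E /\
    (conjugate phi ((d / 2) *: f) < 1%:E)%E.
  apply: conj_small; first exact: dual_spaceZ.
  rewrite dual_normZ // (le_lt_trans (ler_piMr _ f1)) ?ltW //.
  by rewrite ltr_pdivrMr // ltr_pMr ?ltr1n.
have := le_lt_trans (fenchel_young phi ((d / 2) *: f) x) conj_lt1.
have := phi_nNy x; case: (phi x) => [q| |] // _; last by rewrite ltry.
rewrite scale_functionalE fx -EFinB !lte_fin => q_gt.
have : d / 2 * (2 * (`|M| + 1) / d) < d / 2 * `|x| by rewrite ltr_pM2l.
have -> : d / 2 * (2 * (`|M| + 1) / d) = `|M| + 1 by field; rewrite gt_eqF.
have := ler_norm M; lra.
Qed.

Theorem Orlicz_of_conjugate : Orlicz_on setT (fun x : X => `|x|) phi.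
Proof.
split; first exact/even_of_conjugate_even/conj_Orlicz.1.
do 3!split => //.
split; [exact: lim0_of_Orlicz_conjugate | exact: coercive_of_Orlicz_conjugate].
Qed.

End OrliczOfConjugate.

Theorem lemma3p2p3 (R : realType) (X : completeNormedModType R)
  (phi : X -> \bar R) :
  convex_on setT phi ->
  lsc_on setT (fun x : X => `|x|) phi ->
  proper_on setT phi ->
  (Orlicz_on setT (fun x : X => `|x|) phi <->
   Orlicz_on (@dual_space R X) (@dual_norm R X) (conjugate phi)).
Proof.
move=> phi_cvx phi_lsc phi_proper; split; first exact: Orlicz_conjugate.
exact: Orlicz_of_conjugate.
Qed.
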